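(* Let $\varepsilon\in(0,1)$, $\alpha\in(0,1/5)$, $d$ with $\alpha d\ge1$, and let $G=(V,E)$ be a graph with no isolated vertices, $V=W\cup B$ a partition, $n=|V|$, such that: $G$ is an $(n,d,\alpha)$-expander; $G[W]$ has maximum degree $d_{\max}$ and minimum degree at least $2(\varepsilon+\alpha)d$; with $\delta=\varepsilon d/(d_{\max}-2\varepsilon d)$ we have $\frac{8(1+\delta)(d_{\max}+1)}{\delta^2\exp(\frac{\varepsilon}{40\alpha}\log(1+\delta))}\le1$ and $\frac{8}{d_{\max}-4\varepsilon d}\le 1$; and (B1) $|B|\le\alpha n$, (B2) no edge has both endpoints in $B$, (B3) $\deg v\le d_{\max}+1$ for all $v\in B$, (B4) $|N(v)\cap B|\le1$ for all $v\in V$. Then $G[W]$ is a $(|W|,d,2\alpha)$-expander.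
   Context: $\|M\|$ is the spectral norm, $J$ the all-ones matrix of the appropriate size, $A_H$ the adjacency matrix of $H$. A graph $H$ is an $(m,d,\alpha)$-expander if it has $m$ vertices and $\|A_H-\frac dm J\|\le\alpha d$. $G[W]$ is the induced subgraph on $W$; $N(v)$ is the neighborhood of $v$ in $G$. *)

From mathcomp Require Import all_boot all_order all_algebra.
From mathcomp Require Import reals.
From mathcomp.analysis Require Import sequences exp.
Set Implicit Arguments. Unset Strict Implicit. Unset Printing Implicit Defensive.
Import Order.TTheory GRing.Theory Num.Theory.
Local Open Scope ring_scope.

Section Defs.
Variables (R : realType) (T : finType).

Definition simple_graph (e : rel T) := symmetric e /\ irreflexive e.

Definition adj (e : rel T) (u v : T) : R := if e u v then 1 else 0.

(* Spectral (operator 2-) norm bound: for the square matrix M restricted to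
   rows/columns indexed by S, ||M|| <= c, i.e. c >= 0 and
   ||M x||_2^2 <= c^2 ||x||_2^2 for every real vector x indexed by S. *)
Definition spec_norm_le (S : {set T}) (M : T -> T -> R) (c : R) : Prop :=
  0 <= c /\
  forall x : T -> R,
    \sum_(u in S) (\sum_(v in S) M u v * x v) ^+ 2
      <= c ^+ 2 * \sum_(u in S) (x u) ^+ 2.

(* The induced subgraph G[S] (vertex set S, with e restricted to S) is an
   (m,d,alpha)-expander: it has m vertices and ||A_{G[S]} - (d/m) J|| <= alpha d. *)
Definition induced_expander (e : rel T) (S : {set T}) (m : nat) (d alpha : R) : Prop :=
  #|S| = m /\
  spec_norm_le S (fun u v => adj e u v - d / m%:R) (alpha * d).

Definition deg (e : rel T) (v : T) : nat := #|[set u | e v u]|.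
Definition deg_in (e : rel T) (S : {set T}) (v : T) : nat := #|[set u in S | e v u]|.

Definition maxdeg_in (e : rel T) (S : {set T}) : nat := \max_(v in S) deg_in e S v.

End Defs.

(* The principal submatrix of A_G - (d/n) J on W has norm at most alpha d, and
   it differs from A_{G[W]} - (d/|W|) J by the constant matrix (d/n - d/|W|) J_W,
   whose norm |W| (d/|W| - d/n) = d |B| / n is at most alpha d by (B1).  The
   triangle inequality for the spectral norm gives the bound 2 alpha d. *)
From mathcomp Require Import all_boot all_order all_algebra.
From mathcomp Require Import reals.
From mathcomp.analysis Require Import sequences exp.
From mathcomp Require Import ring lra.
Import Order.TTheory GRing.Theory Num.Theory.
Local Open Scope ring_scope.

Lemma sqr_sum_le_card_mul_sum_sqr {R : realFieldType} {T : finType}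
    (S : {set T}) (x : T -> R) :
  (\sum_(v in S) x v) ^+ 2 <= #|S|%:R * \sum_(v in S) x v ^+ 2.
Proof.
have sum_sqr_diff : \sum_(u in S) \sum_(v in S) (x u - x v) ^+ 2 =
    2 * (#|S|%:R * \sum_(v in S) x v ^+ 2) - 2 * (\sum_(v in S) x v) ^+ 2.
  transitivity (\sum_(u in S) \sum_(v in S) (x u ^+ 2 + x v ^+ 2 - 2 * (x u * x v))).
    by apply: eq_bigr => u _; apply: eq_bigr => v _; ring.
  transitivity (\sum_(u in S) (x u ^+ 2 *+ #|S| + \sum_(v in S) x v ^+ 2
                               - 2 * (x u * \sum_(v in S) x v))).
    by apply: eq_bigr => u _; rewrite !big_split /= sumr_const sumrN -!mulr_sumr.
  rewrite !big_split /= sumrN sumr_const -mulr_sumr -mulr_suml sumrMnl.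
  move: (\sum_(v in S) x v ^+ 2) (\sum_(v in S) x v) => P Q.
  by rewrite -mulr_natr; ring.
have : 0 <= \sum_(u in S) \sum_(v in S) (x u - x v) ^+ 2.
  by apply: sumr_ge0 => u _; apply: sumr_ge0 => v _; apply: sqr_ge0.
by rewrite sum_sqr_diff; lra.
Qed.

Lemma sqr_addr_le {R : realDomainType} (a b c1 c2 : R) :
  c1 * c2 * (a + b) ^+ 2 <= c2 * (c1 + c2) * a ^+ 2 + c1 * (c1 + c2) * b ^+ 2.
Proof.
rewrite -subr_ge0.
have -> : c2 * (c1 + c2) * a ^+ 2 + c1 * (c1 + c2) * b ^+ 2
          - c1 * c2 * (a + b) ^+ 2 = (c2 * a - c1 * b) ^+ 2 by ring.
exact: sqr_ge0.
Qed.

Section SpectralNorm.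
Context {R : realType} {T : finType}.
Implicit Types (S : {set T}) (M N : T -> T -> R) (c : R).

Lemma eq_spec_norm_le S M N c :
  (forall u v, M u v = N u v) -> spec_norm_le S M c -> spec_norm_le S N c.
Proof.
move=> eqMN [c0 HM]; split=> // x.
by under eq_bigr => u _ do under eq_bigr => v _ do rewrite -eqMN; exact: HM.
Qed.

Lemma spec_norm_le_trans S M c c' :
  c <= c' -> spec_norm_le S M c -> spec_norm_le S M c'.
Proof.
move=> lecc' [c0 HM]; split=> [|x]; first exact: le_trans lecc'.
apply: le_trans (HM x) _; apply: ler_wpM2r.
  by apply: sumr_ge0 => u _; apply: sqr_ge0.
by rewrite ler_sqr // nnegrE (le_trans c0).
Qed.

Lemma spec_norm_le_sub S S' M c :
  S' \subset S -> spec_norm_le S M c -> spec_norm_le S' M c.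
Proof.
move=> sS'S [c0 HM]; split=> // x.
have split_sum (F : T -> R) :
    \sum_(v in S) F v = \sum_(v in S') F v + \sum_(v in S :\: S') F v.
  by rewrite (big_setID S') (setIidPr sS'S).
pose x' v := if v \in S' then x v else 0.
have x'_out v : v \in S :\: S' -> x' v = 0.
  by rewrite inE /x' => /andP[/negPf ->].
have x'_in v : v \in S' -> x' v = x v by rewrite /x' => ->.
have inner u : \sum_(v in S) M u v * x' v = \sum_(v in S') M u v * x v.
  rewrite split_sum [X in _ + X]big1 ?addr0 => [|v /x'_out ->]; last exact: mulr0.
  by apply: eq_bigr => v /x'_in ->.
have := HM x'; under eq_bigr => u _ do rewrite inner.
rewrite !split_sum [X in _ <= _ * (_ + X)]big1 => [|v /x'_out ->];
  last by rewrite expr0n.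
rewrite addr0 [X in _ <= _ * X](eq_bigr (fun v => x v ^+ 2)); last by move=> v /x'_in ->.
apply: le_trans; rewrite lerDl.
by apply: sumr_ge0 => u _; apply: sqr_ge0.
Qed.

Lemma spec_norm_le_const S (k : R) :
  spec_norm_le S (fun _ _ => k) (`|k| * #|S|%:R).
Proof.
split=> [|x]; first by apply: mulr_ge0.
under eq_bigr => u _ do rewrite -mulr_sumr.
rewrite sumr_const -[X in X <= _]mulr_natr !exprMn real_normK ?num_real //.
have k2S_ge0 : 0 <= k ^+ 2 * #|S|%:R by rewrite mulr_ge0 ?sqr_ge0.
have := sqr_sum_le_card_mul_sum_sqr S x.
move: (\sum_(v in S) x v) (\sum_(v in S) x v ^+ 2) => Q P le_QP.
nra.
Qed.

Lemma spec_norm_leD S M N c1 c2 : 0 < c1 -> 0 < c2 ->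
  spec_norm_le S M c1 -> spec_norm_le S N c2 ->
  spec_norm_le S (fun u v => M u v + N u v) (c1 + c2).
Proof.
move=> c1_gt0 c2_gt0 [_ HM] [_ HN]; split=> [|x]; first lra.
set X := \sum_(u in S) x u ^+ 2.
pose a u := \sum_(v in S) M u v * x v.
pose b u := \sum_(v in S) N u v * x v.
have HMx : \sum_(u in S) a u ^+ 2 <= c1 ^+ 2 * X := HM x.
have HNx : \sum_(u in S) b u ^+ 2 <= c2 ^+ 2 * X := HN x.
have sumD u : \sum_(v in S) (M u v + N u v) * x v = a u + b u.
  by rewrite /a /b -big_split; apply: eq_bigr => v _; rewrite mulrDl.
under eq_bigr => u _ do rewrite sumD.
have c12_gt0 : 0 < c1 * c2 by apply: mulr_gt0.
rewrite -(ler_pM2l c12_gt0) mulr_sumr.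
(* (a + b)^2 <= (1 + c2/c1) a^2 + (1 + c1/c2) b^2: these weights turn the
   bounds c1^2 X and c2^2 X into (c1 + c2)^2 X. *)
apply: le_trans (ler_sum _ (fun u _ => sqr_addr_le (a u) (b u) c1 c2)) _.
rewrite big_split /= -!mulr_sumr.
have c12D_ge0 : 0 <= c1 + c2 by lra.
have c2c12_ge0 := mulr_ge0 (ltW c2_gt0) c12D_ge0.
have c1c12_ge0 := mulr_ge0 (ltW c1_gt0) c12D_ge0.
apply: le_trans (lerD (ler_wpM2l c2c12_ge0 HMx) (ler_wpM2l c1c12_ge0 HNx)) _.
by rewrite le_eqVlt; apply/orP; left; apply/eqP; ring.
Qed.

End SpectralNorm.

Lemma density_gap_le {R : realFieldType} (a d : R) (w b : nat) :
  0 <= a -> 0 <= d -> b%:R <= a * (w + b)%:R ->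
  `|d / (w + b)%:R - d / w%:R| * w%:R <= a * d.
Proof.
move=> a_ge0 d_ge0 b_small; have [->|w_gt0] := posnP w.
  by rewrite mulr0 mulr_ge0.
have n_gt0 : (0 : R) < (w + b)%:R by rewrite ltr0n addn_gt0 w_gt0.
have gap_eq : (d / (w + b)%:R - d / w%:R) * w%:R = - (d * b%:R / (w + b)%:R).
  by rewrite natrD in n_gt0 *; field; rewrite ?pnatr_eq0 -?lt0n ?w_gt0 ?gt_eqF.
rewrite -{2}[w%:R]ger0_norm ?ler0n // -normrM gap_eq normrN.
rewrite ger0_norm ?divr_ge0 ?mulr_ge0 // ler_pdivrMr //.
by rewrite mulrAC [leRHS]mulrC ler_wpM2l.
Qed.

Theorem lemma2p4 (R : realType) (T : finType) (e : rel T)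
    (W B : {set T}) (eps alpha d : R) :
  simple_graph e ->
  0 < eps < 1 ->
  0 < alpha < 1 / 5 ->
  1 <= alpha * d ->
  (forall v : T, exists u : T, e v u) ->
  [disjoint W & B] -> W :|: B = [set: T] ->
  induced_expander (R:=R) e [set: T] #|T| d alpha ->
  (forall v, v \in W -> 2 * (eps + alpha) * d <= (deg_in e W v)%:R) ->
  let dmax : R := (maxdeg_in e W)%:R in
  let delta : R := eps * d / (dmax - 2 * eps * d) in
  8 * (1 + delta) * (dmax + 1)
    / (delta ^+ 2 * expR (eps / (40 * alpha) * ln (1 + delta))) <= 1 ->
  8 / (dmax - 4 * eps * d) <= 1 ->
  (#|B|%:R <= alpha * #|T|%:R) ->
  (forall u v, u \in B -> v \in B -> ~~ e u v) ->
  (forall v, v \in B -> ((deg e v)%:R <= dmax + 1)) ->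
  (forall v : T, (deg_in e B v <= 1)%N) ->
  induced_expander (R:=R) e W #|W| d (2 * alpha).
Proof.
move=> _ _ /andP[alpha_gt0 _] alpha_d_ge1 _ disjWB WUB [_ expander_T] _ dmax delta
  _ _ B_small _ _ _.
have alpha_d_gt0 : 0 < alpha * d by lra.
have d_gt0 : 0 < d by rewrite -(pmulr_rgt0 _ alpha_gt0).
have card_T : #|T| = (#|W| + #|B|)%N.
  by rewrite -cardsT -WUB cardsU (disjoint_setI0 disjWB) cards0 subn0.
split=> //.
apply: (eq_spec_norm_le _
  (fun u v => (adj R e u v - d / #|T|%:R) + (d / #|T|%:R - d / #|W|%:R))).
  by move=> u v; rewrite subrKA.
have -> : 2 * alpha * d = alpha * d + alpha * d by ring.
apply: spec_norm_leD => //; first exact: spec_norm_le_sub (subsetT W) expander_T.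
apply: spec_norm_le_trans (spec_norm_le_const W _).
rewrite card_T; apply: density_gap_le; [exact: ltW | exact: ltW | by rewrite -card_T].
Qed.
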